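(* Let $k$ be a positive integer and let $T$ be an $n$-vertex tournament with $\Delta^+(T)-\delta^+(T)\le \frac{n}{10k}-k^2$. Then $T$ contains a $1$-subdivision of $\vec{K}_k$.
   Context: A tournament is a digraph in which for every two distinct vertices exactly one of the two possible arcs between them is present. $\Delta^+(T)$ and $\delta^+(T)$ denote the maximum and minimum out-degree of $T$. $\vec{K}_k$ is the complete digraph on $k$ vertices, having all $k(k-1)$ arcs $uv$ for ordered pairs of distinct vertices. The $1$-subdivision of a digraph is obtained by replacing every arc $uv$ by a directed path $u\to w\to v$ of length two through a new vertex $w$ (distinct new vertices for distinct arcs); $T$ contains it if some subgraph of $T$ is isomorphic to it. *)

From mathcomp Require Import all_boot all_order all_algebra.
Set Implicit Arguments. Unset Strict Implicit. Unset Printing Implicit Defensive.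

Definition is_tournament (V : finType) (e : rel V) : Prop :=
  (forall x, ~~ e x x) /\
  (forall x y, x != y -> (e x y (+) e y x)).

Definition outdeg (V : finType) (e : rel V) (x : V) : nat := #|[set y | e x y]|.

Definition maxoutdeg (V : finType) (e : rel V) : nat := \max_(x : V) outdeg e x.

(* minimum out-degree delta^+ (the neutral element #|V| is an upper bound of
   every out-degree, so this is the genuine minimum when V is nonempty) *)
Definition minoutdeg (V : finType) (e : rel V) : nat :=
  \big[minn/#|V|]_(x : V) outdeg e x.

Definition contains_subdiv1_complete (V : finType) (e : rel V) (k : nat) : Prop :=
  exists (f : 'I_k -> V) (g : 'I_k -> 'I_k -> V),
    injective f /\
    (forall i j i' j', i != j -> i' != j' -> g i j = g i' j' -> i = i' /\ j = j') /\
    (forall i j l, i != j -> g i j != f l) /\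
    (forall i j, i != j -> e (f i) (g i j) && e (g i j) (f j)).

From mathcomp Require Import all_boot all_order all_algebra.
From mathcomp Require Import zify.
Import Order.TTheory GRing.Theory Num.Theory.
Set Implicit Arguments. Unset Strict Implicit. Unset Printing Implicit Defensive.

(* Let p(u,v) be the number of paths u -> w -> v.  In a tournament
   p(u,v) + d+(v) <= p(v,u) + d+(u) + 1, so when all out-degrees lie within D
   of each other, every v with p(u,v) < M or p(v,u) < M has both counts at most
   M + D.  The out-neighbours of u among these v span a subtournament in which
   the in-degree of v is at most p(u,v), so there are at most 2(M + D) + 1 of
   them, and symmetrically for the in-neighbours.  With M = k^2 + k a greedy
   choice therefore yields k branch vertices joined pairwise by at least
   k^2 + k paths of length two, which leaves enough room to choose the k(k-1)
   midpoints greedily, distinct from each other and from the branch vertices. *)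

Section Tournament.
Variables (V : finType) (e : rel V).
Hypothesis tourn : is_tournament e.

Lemma tournament_irrefl x : e x x = false.
Proof. by case: tourn => irr _; apply/negbTE. Qed.

Lemma tournament_arcs x y : (e x y : nat) + e y x = (x != y).
Proof.
have [->|nxy] := eqVneq x y; first by rewrite tournament_irrefl.
by case: tourn => _ /(_ x y nxy); case: (e x y); case: (e y x).
Qed.

Lemma tournament_asym x y : e x y -> e y x = false.
Proof.
by move=> exy; have := tournament_arcs x y; rewrite exy; case: (e y x); case: (_ != _).
Qed.

Lemma tournament_total x y : x != y -> e x y || e y x.
Proof.
by move=> nxy; have := tournament_arcs x y; rewrite nxy; case: (e x y); case: (e y x).
Qed.

Lemma card_sub_tournament_le_indeg (A : {set V}) m :
  {in A, forall v, #|[set w in A | e w v]| <= m} -> #|A| <= 2 * m + 1.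
Proof.
move=> indegA.
have indegE v : #|[set w in A | e w v]| = \sum_(w in A) (e w v : nat).
  by rewrite -sum1dep_card big_mkcondr; apply: eq_bigr => w _; case: (e w v).
have arcs : \sum_(v in A) \sum_(w in A) ((e w v : nat) + e v w) = #|A| * (#|A| - 1).
  rewrite -sum_nat_const; apply: eq_bigr => v vA.
  under eq_bigr do rewrite tournament_arcs.
  rewrite (bigD1 v) //= eqxx add0n (cardsD1 v A) vA add1n subn1 /= -sum1_card.
  by apply: eq_big => [w | w /andP [_ ->]] //; rewrite !inE andbC.
have double : \sum_(v in A) \sum_(w in A) ((e w v : nat) + e v w) =
              2 * \sum_(v in A) \sum_(w in A) (e w v : nat).
  under eq_bigr do rewrite big_split.
  by rewrite big_split /= [X in _ + X]exchange_big /= addnn mul2n.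
have : \sum_(v in A) \sum_(w in A) (e w v : nat) <= #|A| * m.
  by rewrite -sum_nat_const; apply: leq_sum => v vA; rewrite -indegE indegA.
nia.
Qed.

Definition npath2 x y := #|[set w | e x w && e w y]|.

Lemma npath2_id u : npath2 u u = 0.
Proof.
apply/eqP; rewrite cards_eq0; apply/eqP/setP => w; rewrite !inE.
by case euw: (e u w); rewrite // tournament_asym.
Qed.

Lemma npath2_outdeg u v :
  u != v -> npath2 u v + outdeg e v <= npath2 v u + outdeg e u + 1.
Proof.
move=> nuv; rewrite /npath2 /outdeg.
set Puv := [set w | e u w && e w v]; set Pvu := [set w | e v w && e w u].
set Out2 := [set w | e u w && e v w].
have outu : #|Puv| + #|Out2| <= #|[set y | e u y]|.
  have disj : [disjoint Puv & Out2].
    rewrite -setI_eq0; apply/eqP/setP => w; rewrite !inE.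
    by case: (e u w); case ewv: (e w v); rewrite //= tournament_asym.
  rewrite -cardsUI (disjoint_setI0 disj) cards0 addn0; apply: subset_leq_card.
  by apply/subsetP => w; rewrite !inE; case: (e u w).
have outv : [set y | e v y] \subset Out2 :|: Pvu :|: [set u].
  apply/subsetP => w; rewrite !inE => evw.
  have [-> | nwu] := eqVneq w u; first by rewrite orbT.
  rewrite evw /=.
  by have := tournament_total nwu; case: (e w u); case: (e u w); rewrite ?orbF.
have := subset_leq_card outv; have := (leq_card_setU (Out2 :|: Pvu) [set u]).1.
have := (leq_card_setU Out2 Pvu).1; rewrite cards1; lia.
Qed.

End Tournament.

Lemma is_tournament_rev (V : finType) (e : rel V) :
  is_tournament e -> is_tournament (fun x y => e y x).
Proof. by case=> irr tot; split=> // x y nxy; rewrite addbC tot. Qed.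

Definition npath2_ball (V : finType) (e : rel V) M u :=
  [set v | (npath2 e u v < M) || (npath2 e v u < M)].

Section Ball.
Variables (V : finType) (e : rel V) (M D : nat).
Hypotheses (tourn : is_tournament e)
  (spread : forall x y, outdeg e x <= outdeg e y + D).

Lemma npath2_ball_le u v :
  v \in npath2_ball e M u -> u != v ->
  npath2 e u v <= M + D /\ npath2 e v u <= M + D.
Proof.
rewrite inE => near nuv.
have := npath2_outdeg tourn nuv; rewrite eq_sym in nuv; have := npath2_outdeg tourn nuv.
have := spread u v; have := spread v u; case/orP: near; lia.
Qed.

Lemma card_npath2_ball u : #|npath2_ball e M u| <= 4 * (M + D) + 3.
Proof.
set B := npath2_ball e M u.
set Bout := [set v in B | e u v]; set Bin := [set v in B | e v u].
have coverB : B \subset Bout :|: Bin :|: [set u].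
  apply/subsetP => v; rewrite !inE => -> /=.
  have [-> | nvu] := eqVneq v u; first by rewrite orbT.
  by rewrite orbF orbC tournament_total.
have Bout_small : #|Bout| <= 2 * (M + D) + 1.
  apply: (card_sub_tournament_le_indeg tourn) => v; rewrite inE => /andP [vB euv].
  have nuv : u != v by apply: contraTneq euv => <-; rewrite tournament_irrefl.
  apply: leq_trans (npath2_ball_le vB nuv).1; apply: subset_leq_card.
  by apply/subsetP => w; rewrite !inE => /andP [/andP [_ ->] ->].
have Bin_small : #|Bin| <= 2 * (M + D) + 1.
  apply: (card_sub_tournament_le_indeg (is_tournament_rev tourn)).
  move=> v; rewrite inE => /andP [vB evu].
  have nuv : u != v by apply: contraTneq evu => <-; rewrite tournament_irrefl.
  apply: leq_trans (npath2_ball_le vB nuv).2; apply: subset_leq_card.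
  by apply/subsetP => w; rewrite !inE => /andP [/andP [_ ->] ->].
have := subset_leq_card coverB; have := (leq_card_setU (Bout :|: Bin) [set u]).1.
have := (leq_card_setU Bout Bin).1; rewrite cards1; lia.
Qed.

End Ball.

Lemma exists_scattered_subset (T : finType) (ball : T -> {set T}) b :
  (forall u, u \in ball u) -> (forall u v, v \in ball u -> u \in ball v) ->
  (forall u, #|ball u| <= b) ->
  forall m (W : {set T}), m * b < #|W| ->
  exists S : {set T}, [/\ S \subset W, #|S| = m.+1 &
     {in S &, forall x y, y \in ball x -> y = x}].
Proof.
move=> ball_refl ball_sym ball_card.
elim=> [|m IH] W ltW; have /card_gt0P [u uW] : 0 < #|W| by apply: leq_ltn_trans ltW.
  exists [set u]; rewrite sub1set cards1; split=> // x y.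
  by rewrite !inE => /eqP -> /eqP ->.
have [|S [subS cardS scatS]] := IH (W :\: ball u).
  have := cardsID (ball u) W; have := subset_leq_card (subsetIr W (ball u)).
  have := ball_card u; rewrite mulSn in ltW; lia.
have notin_ball x : x \in S -> x \notin ball u.
  by move=> /(subsetP subS); rewrite inE => /andP [].
have uNS : u \notin S by apply: contraL (ball_refl u); apply: notin_ball.
exists (u |: S); split; first by rewrite subUset sub1set uW (subset_trans subS) ?subsetDl.
  by rewrite cardsU1 uNS cardS.
move=> x y; rewrite !inE => /predU1P [-> | xS] /predU1P [-> | yS] //.
- by move=> yu; have := notin_ball y yS; rewrite yu.
- by move=> /ball_sym xu; have := notin_ball x xS; rewrite xu.
- exact: scatS.
Qed.

Lemma exists_distinct_reps_avoiding (I V : finType) (x0 : V) (C : I -> {set V})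
    (A : {set I}) (F : {set V}) :
  {in A, forall p, #|F| + #|A| <= #|C p|} ->
  exists g : I -> V, {in A, forall p, g p \in C p :\: F} /\ {in A &, injective g}.
Proof.
have [n] := ubnP #|A|; elim: n A F => // n IH A F ltAn bigC.
have [-> | [p0 p0A]] := set_0Vmem A; first by exists (fun=> x0); split=> p; rewrite inE.
have /card_gt0P [x xC] : 0 < #|C p0 :\: F|.
  have := bigC p0 p0A; have := cardsID F (C p0).
  have := subset_leq_card (subsetIr (C p0) F); rewrite (cardsD1 p0 A) p0A; lia.
have cardA : #|A| = #|A :\ p0|.+1 by rewrite (cardsD1 p0 A) p0A.
have ltA' : #|A :\ p0| < n by rewrite -ltnS -cardA.
have bigC' : {in A :\ p0, forall p, #|x |: F| + #|A :\ p0| <= #|C p|}.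
  move=> p /setD1P [_ pA]; have := bigC p pA; rewrite cardsU1 cardA; lia.
have [g [gC ginj]] := IH _ _ ltA' bigC'.
have gNx p : p \in A :\ p0 -> g p != x.
  by move=> /gC; rewrite !inE negb_or => /andP [/andP []].
exists (fun p => if p == p0 then x else g p); split.
  move=> p pA; have [-> // | np] := eqVneq p p0.
  by have := gC p; rewrite !inE np pA negb_or => /(_ isT) /andP [/andP [_ ->]].
move=> p q pA qA /=.
have [-> | np] := eqVneq p p0; have [-> | nq] := eqVneq q p0 => //.
- by move=> xg; have := gNx q; rewrite !inE nq qA -xg eqxx => /(_ isT).
- by move=> gx; have := gNx p; rewrite !inE np pA gx eqxx => /(_ isT).
- by apply: ginj; rewrite !inE ?np ?nq.
Qed.

Lemma contains_subdiv1_complete_npath2 (V : finType) (e : rel V) k (f : 'I_k -> V) :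
  0 < k -> injective f ->
  (forall i j, i != j -> k * k + k <= npath2 e (f i) (f j)) ->
  contains_subdiv1_complete e k.
Proof.
move=> k_gt0 finj many_paths.
pose C (p : 'I_k * 'I_k) := [set w | e (f p.1) w && e w (f p.2)].
pose A := [set p : 'I_k * 'I_k | p.1 != p.2].
pose F := [set f i | i : 'I_k].
have bigC : {in A, forall p, #|F| + #|A| <= #|C p|}.
  move=> [i j]; rewrite inE /= => nij.
  have cardF : #|F| <= k by rewrite (leq_trans (leq_imset_card _ _)) ?card_ord.
  have cardA : #|A| <= k * k by rewrite (leq_trans (max_card _)) ?card_prod ?card_ord.
  by apply: leq_trans (many_paths _ _ nij); rewrite addnC leq_add.
have [g [gC ginj]] := exists_distinct_reps_avoiding (f (Ordinal k_gt0)) bigC.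
have gCF i j : i != j -> g (i, j) \in C (i, j) :\: F by move=> nij; apply: gC; rewrite inE.
exists f, (fun i j => g (i, j)); split=> //; split; [|split].
- by move=> i j i' j' nij nij' /ginj; rewrite !inE => /(_ nij nij') [-> ->].
- move=> i j l /gCF; rewrite inE => /andP [gNF _].
  by apply: contraNneq gNF => ->; apply: imset_f.
- by move=> i j /gCF; rewrite !inE => /andP [_].
Qed.

Lemma exists_npath2_separated (V : finType) (e : rel V) M D m :
  0 < M -> is_tournament e -> (forall x y, outdeg e x <= outdeg e y + D) ->
  m * (4 * (M + D) + 3) < #|V| ->
  exists f : 'I_m.+1 -> V,
    injective f /\ forall i j, i != j -> M <= npath2 e (f i) (f j).
Proof.
move=> M_gt0 tourn spread ltV.
have ball_refl u : u \in npath2_ball e M u by rewrite inE npath2_id ?M_gt0.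
have ball_sym u v : v \in npath2_ball e M u -> u \in npath2_ball e M v.
  by rewrite !inE orbC.
rewrite -cardsT in ltV.
have [S [_ cardS scatS]] := exists_scattered_subset ball_refl ball_sym
  (card_npath2_ball M tourn spread) ltV.
pose f i := enum_val (cast_ord (esym cardS) i).
have fS i : f i \in S by apply: enum_valP.
exists f; split=> [i j /enum_val_inj /cast_ord_inj // | i j nij].
have : f j \notin npath2_ball e M (f i).
  by apply: contra nij => /(scatS _ _ (fS i) (fS j)) /enum_val_inj /cast_ord_inj ->.
by rewrite inE negb_or -!leqNgt => /andP [].
Qed.

Section DegreeBounds.
Variables (V : finType) (e : rel V).

Lemma minoutdeg_le_outdeg x : minoutdeg e <= outdeg e x.
Proof. by rewrite /minoutdeg -minEnat -leEnat; apply: bigmin_le. Qed.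

Lemma outdeg_le_maxoutdeg x : outdeg e x <= maxoutdeg e.
Proof. exact: leq_bigmax. Qed.

Lemma outdeg_le_spread x y :
  outdeg e x <= outdeg e y + (maxoutdeg e - minoutdeg e).
Proof.
have := minoutdeg_le_outdeg y; have := outdeg_le_maxoutdeg x.
have := outdeg_le_maxoutdeg y; lia.
Qed.

Lemma minoutdeg_le_maxoutdeg : minoutdeg e <= maxoutdeg e.
Proof.
have [V0 | /card_gt0P [x _]] := posnP #|V|.
  suff: minoutdeg e <= #|V| by rewrite V0 leqn0 => /eqP ->.
  by rewrite /minoutdeg -minEnat -leEnat; apply: bigmin_le_id.
exact: leq_trans (minoutdeg_le_outdeg x) (outdeg_le_maxoutdeg x).
Qed.

End DegreeBounds.

Local Open Scope ring_scope.

Theorem theorem1p3 (k : nat) (V : finType) (e : rel V) :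
  (0 < k)%N ->
  is_tournament e ->
  ((maxoutdeg e)%:R - (minoutdeg e)%:R : rat)
    <= (#|V|)%:R / (10 * k)%:R - (k ^ 2)%:R ->
  contains_subdiv1_complete e k.
Proof.
move=> k_gt0 tourn.
set D := (maxoutdeg e - minoutdeg e)%N.
rewrite -natrB ?minoutdeg_le_maxoutdeg // -/D lerBrDr.
rewrite ler_pdivlMr ?ltr0n ?muln_gt0 // -natrD -natrM ler_nat => bigV.
have ltV : (k.-1 * (4 * (k * k + k + D) + 3) < #|V|)%N.
  by move: bigV; case: k k_gt0 => // k' _; rewrite /= -mulnn; nia.
have := exists_npath2_separated (ltn_addl (k * k) k_gt0) tourn
  (@outdeg_le_spread V e) ltV.
rewrite prednK // => -[f [finj sep]].
exact: contains_subdiv1_complete_npath2 k_gt0 finj sep.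
Qed.
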